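(* Let $\mathcal V$ be a finite state space and consider a source continuous-time discrete diffusion (continuous-time Markov chain) whose learned reverse process has reverse-rate matrix $\widetilde R_t^\theta(\mathbf y', \mathbf y)$, so that for $s = t - \Delta t$ the source backward kernel satisfies $p_{s\mid t}(\mathbf y' \mid \mathbf y) = \delta_{\mathbf y', \mathbf y} + \widetilde R_t^\theta(\mathbf y', \mathbf y)\,\Delta t + \mathcal O(\Delta t^2)$. Let $r_\phi : \mathcal V \to (0,\infty)$ be the density-ratio guidance term (approximating $\mathbb E_{\mathbf x \sim p(\cdot \mid \mathbf y)}[q(\mathbf x)/p(\mathbf x)]$, where $p$ and $q$ are the source and target data distributions sharing the same forward process), and let the target backward kernel be $$q^{\psi}_{s\mid t}(\mathbf y' \mid \mathbf y) = \frac{p_{s\mid t}(\mathbf y' \mid \mathbf y)\, r_\phi(\mathbf y')}{\sum_{\tilde{\mathbf y} \in \mathcal V} p_{s\mid t}(\tilde{\mathbf y} \mid \mathbf y)\, r_\phi(\tilde{\mathbf y})}.$$ Then $q^{\psi}_{s\mid t}(\mathbf y' \mid \mathbf y) = \delta_{\mathbf y', \mathbf y} + \widetilde R_t^\psi(\mathbf y', \mathbf y)\,\Delta t + \mathcal O(\Delta t^2)$, i.e. sampling from the target distribution is governed by the target reverse-rate matrix $$\widetilde R_t^{\psi}(\mathbf y', \mathbf y) = \begin{cases} \dfrac{r_\phi(\mathbf y')}{r_\phi(\mathbf y)}\,\widetilde R_t^\theta(\mathbf y', \mathbf y), & \mathbf y' \neq \mathbf y,\\[8pt] -\displaystyle\sum_{\tilde{\mathbf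 y} \neq \mathbf y} \dfrac{r_\phi(\tilde{\mathbf y})}{r_\phi(\mathbf y)}\,\widetilde R_t^\theta(\tilde{\mathbf y}, \mathbf y), & \mathbf y' = \mathbf y.\end{cases}$$
   Context: In the continuous-time framework, $t \in [0,T]$ is continuous, $p_{s\mid t}(\mathbf y' \mid \mathbf y) := p(\mathbf z_s = \mathbf y' \mid \mathbf z_t = \mathbf y)$ is the backward kernel, $\delta_{\mathbf y', \mathbf y}$ is the Kronecker delta, and $\mathcal O(\Delta t^2)$ denotes terms of order $\Delta t^2$ or higher as $\Delta t \to 0$. A reverse-rate matrix has nonnegative off-diagonal entries and columns summing to zero. The form of $q^{\psi}_{s\mid t}$ is the optimal target reverse kernel from ratio-based transfer: the reweighting of the source backward kernel by the ratio $r_\phi$ of the next state. *)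

From mathcomp Require Import all_boot all_order all_algebra.
Set Implicit Arguments. Unset Strict Implicit. Unset Printing Implicit Defensive.
Import Order.TTheory GRing.Theory Num.Theory.
Local Open Scope ring_scope.

Definition kdelta {V : finType} {R : numDomainType} (y' y : V) : R :=
  if y' == y then 1 else 0.

(* f(dt) = O(dt^2) as dt -> 0+ (dt > 0 is the step size, s = t - dt). *)
Definition bigO_sq {R : realFieldType} (f : R -> R) : Prop :=
  exists C : R, exists eta : R, 0 < eta /\
    forall h : R, 0 < h -> h < eta -> `|f h| <= C * h ^+ 2.

(* Reverse-rate matrix Rm (Rm y' y = rate from y to y'): nonnegative
   off-diagonal entries, columns (fixed y) summing to zero. *)
Definition is_rate_matrix {V : finType} {R : realFieldType} (Rm : V -> V -> R) : Prop :=
  (forall y' y, y' != y -> 0 <= Rm y' y) /\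
  (forall y, \sum_(y' : V) Rm y' y = 0).

(* Target backward kernel obtained by ratio reweighting; p dt y' y = p_{s|t}(y'|y). *)
Definition qpsi {V : finType} {R : realFieldType}
  (p : R -> V -> V -> R) (r : V -> R) (dt : R) (y' y : V) : R :=
  p dt y' y * r y' / \sum_(yt : V) p dt yt y * r yt.

Definition Rpsi {V : finType} {R : realFieldType}
  (Rth : V -> V -> R) (r : V -> R) (y' y : V) : R :=
  if y' != y then r y' / r y * Rth y' y
  else - \sum_(yt : V | yt != y) r yt / r y * Rth yt y.

(* Both the numerator [p_h(y'|y) r(y')] and the normaliser
   [Z(h) = sum_z p_h(z|y) r(z)] of the reweighted kernel have first-order
   expansions in the step size [h], with [Z(0) = r(y) > 0].  A first-order
   quotient rule then expands their ratio as [delta + c h + O(h^2)], and [c]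
   is [R^psi(y', y)] once one notes that [delta r(y') = delta r(y)]. *)
From mathcomp Require Import all_boot all_order all_algebra.
From mathcomp Require Import ring lra.
Set Implicit Arguments. Unset Strict Implicit. Unset Printing Implicit Defensive.
Import Order.TTheory GRing.Theory Num.Theory.
Local Open Scope ring_scope.

Section Kronecker.
Variables (V : finType) (R : numDomainType).

Lemma kdelta_mull (F : V -> R) (y' y : V) :
  kdelta y' y * F y' = kdelta y' y * F y.
Proof. by rewrite /kdelta; case: eqVneq => [->|]; rewrite ?mul0r. Qed.

Lemma sum_kdelta_mull (F : V -> R) (y : V) :
  \sum_(z : V) kdelta z y * F z = F y.
Proof.
rewrite (bigD1 y) //= /kdelta eqxx mul1r big1 ?addr0 // => z /negbTE ->.
by rewrite mul0r.
Qed.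

End Kronecker.

Section SmallStepAsymptotics.
Variable R : realFieldType.

Definition near0 (P : R -> Prop) : Prop :=
  exists eta : R, 0 < eta /\ forall h, 0 < h -> h < eta -> P h.

Lemma near0_lt (e : R) : 0 < e -> near0 (fun h => h < e).
Proof. by move=> e_gt0; exists e. Qed.

Lemma near0_and (P Q : R -> Prop) :
  near0 P -> near0 Q -> near0 (fun h => P h /\ Q h).
Proof.
move=> [e1 [e1_gt0 HP]] [e2 [e2_gt0 HQ]].
exists (Order.min e1 e2); split; first by rewrite lt_min e1_gt0 e2_gt0.
move=> h h_gt0; rewrite lt_min => /andP[he1 he2].
by split; [apply: HP|apply: HQ].
Qed.

Lemma near0_mono (P Q : R -> Prop) :
  (forall h, 0 < h -> P h -> Q h) -> near0 P -> near0 Q.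
Proof. by move=> PQ [e [e_gt0 HP]]; exists e; split=> // h h_gt0 he; auto. Qed.

Lemma bigO_sqE (f : R -> R) :
  bigO_sq f <-> exists C, near0 (fun h => `|f h| <= C * h ^+ 2).
Proof. by []. Qed.

Lemma bigO_sq_eq (f g : R -> R) :
  near0 (fun h => f h = g h) -> bigO_sq g -> bigO_sq f.
Proof.
move=> Efg /bigO_sqE[C Hg]; apply/bigO_sqE; exists C.
by apply: near0_mono (near0_and Efg Hg) => h _ [-> ].
Qed.

Lemma bigO_sq_add (f g : R -> R) :
  bigO_sq f -> bigO_sq g -> bigO_sq (fun h => f h + g h).
Proof.
move=> /bigO_sqE[C1 Hf] /bigO_sqE[C2 Hg]; apply/bigO_sqE; exists (C1 + C2).
apply: near0_mono (near0_and Hf Hg) => h _ [fC gC].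
by rewrite mulrDl (le_trans (ler_normD _ _)) // lerD.
Qed.

Lemma bigO_sq_sum (I : Type) (s : seq I) (F : I -> R -> R) :
  (forall i, bigO_sq (F i)) -> bigO_sq (fun h => \sum_(i <- s) F i h).
Proof.
move=> HF; elim: s => [|i s IHs].
  apply/bigO_sqE; exists 0; apply: near0_mono (near0_lt ltr01) => h _ _.
  by rewrite big_nil normr0 mul0r.
apply: bigO_sq_eq (bigO_sq_add (HF i) IHs).
by apply: near0_mono (near0_lt ltr01) => h _ _; rewrite big_cons.
Qed.

Lemma bigO_sq_mul (M : R) (g f : R -> R) :
  near0 (fun h => `|g h| <= M) -> bigO_sq f -> bigO_sq (fun h => g h * f h).
Proof.
move=> Hg /bigO_sqE[C Hf]; apply/bigO_sqE; exists (M * C).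
apply: near0_mono (near0_and Hg Hf) => h _ [gM fC].
by rewrite normrM -mulrA ler_pM.
Qed.

Lemma bigO_sq_mull (c : R) (f : R -> R) :
  bigO_sq f -> bigO_sq (fun h => c * f h).
Proof.
by apply: (bigO_sq_mul (M := `|c|)); apply: near0_mono (near0_lt ltr01).
Qed.

Lemma bigO_sq_mulid (f : R -> R) : bigO_sq f -> bigO_sq (fun h => h * f h).
Proof.
apply: (bigO_sq_mul (M := 1)); apply: near0_mono (near0_lt ltr01) => h h_gt0.
by rewrite gtr0_norm // => /ltW.
Qed.

Lemma bigO_sq_sqr (c : R) : bigO_sq (fun h => c * h ^+ 2).
Proof.
apply/bigO_sqE; exists `|c|; apply: near0_mono (near0_lt ltr01) => h _ _.
by rewrite normrM (ger0_norm (sqr_ge0 h)).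
Qed.

Lemma bigO_sq_divr (f g : R -> R) (m : R) : 0 < m ->
  near0 (fun h => m <= `|g h|) -> bigO_sq f -> bigO_sq (fun h => f h / g h).
Proof.
move=> m_gt0 Hg Hf; have Hinv : near0 (fun h => `|(g h)^-1| <= m^-1).
  apply: near0_mono Hg => h _ mg.
  by rewrite normfV lef_pV2 ?posrE // (lt_le_trans m_gt0).
apply: bigO_sq_eq (bigO_sq_mul Hinv Hf).
by apply: near0_mono (near0_lt ltr01) => h _ _; rewrite mulrC.
Qed.

Definition taylor1 (f : R -> R) (a b : R) : Prop :=
  bigO_sq (fun h => f h - a - b * h).

Lemma taylor1_mulr (f : R -> R) (a b k : R) :
  taylor1 f a b -> taylor1 (fun h => f h * k) (a * k) (b * k).
Proof.
move=> Hf; apply: bigO_sq_eq (bigO_sq_mull k Hf).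
by apply: near0_mono (near0_lt ltr01) => h _ _; ring.
Qed.

Lemma taylor1_sum (I : Type) (s : seq I) (F : I -> R -> R) (a b : I -> R) :
  (forall i, taylor1 (F i) (a i) (b i)) ->
  taylor1 (fun h => \sum_(i <- s) F i h)
          (\sum_(i <- s) a i) (\sum_(i <- s) b i).
Proof.
move=> HF; apply: bigO_sq_eq (bigO_sq_sum s HF).
apply: near0_mono (near0_lt ltr01) => h _ _.
by rewrite mulr_suml -!sumrB.
Qed.

Lemma taylor1_norm_ge (f : R -> R) (a b : R) :
  taylor1 f a b -> a != 0 -> near0 (fun h => `|a| / 2 <= `|f h|).
Proof.
move=> /bigO_sqE[C HC] a_neq0; have a_gt0 : 0 < `|a| by rewrite normr_gt0.
pose K := `|b| + `|C| + 1.
have K_gt0 : 0 < K by rewrite /K ltr_pwDr ?addr_ge0.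
have eta_gt0 : 0 < `|a| / (2 * K) by rewrite divr_gt0 ?mulr_gt0.
have small_h := near0_and (near0_lt ltr01) (near0_lt eta_gt0).
apply: near0_mono (near0_and HC small_h).
move=> h h_gt0 [eC [h_lt1 h_small]].
have dist_a : `|a| <= `|f h| + `|b| * h + `|f h - a - b * h|.
  have split_a : f h - b * h - (f h - a - b * h) = a by ring.
  have := ler_normB (f h - b * h) (f h - a - b * h); rewrite split_a.
  have := ler_normB (f h) (b * h); rewrite normrM (gtr0_norm h_gt0).
  lra.
have Ch2 : C * h ^+ 2 <= `|C| * h.
  rewrite expr2 mulrA ler_pM2r //.
  have := ler_norm C; have := normr_ge0 C; nra.
have Kh : K * h <= `|a| / 2.
  by move: h_small; rewrite ltr_pdivlMr ?mulr_gt0 // => /ltW; lra.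
rewrite /K in Kh; have := normr_ge0 b; nra.
Qed.

Lemma taylor1_div (f g : R -> R) (a b c d : R) :
  taylor1 f a b -> taylor1 g c d -> c != 0 ->
  taylor1 (fun h => f h / g h) (a / c) ((b * c - a * d) / c ^+ 2).
Proof.
move=> Hf Hg c_neq0; set beta := (b * c - a * d) / c ^+ 2.
have half_c_gt0 : 0 < `|c| / 2 by rewrite divr_gt0 ?normr_gt0.
(* With [e_f], [e_g] the remainders of [f], [g], the error is
   [(e_f - a/c e_g - beta d h^2 - beta h e_g) / g h]: the choice of [beta]
   cancels the first-order terms of the numerator. *)
have Hnum := bigO_sq_add (bigO_sq_add (bigO_sq_add Hf
  (bigO_sq_mull (- (a / c)) Hg)) (bigO_sq_sqr (- (beta * d))))
  (bigO_sq_mull (- beta) (bigO_sq_mulid Hg)).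
apply: bigO_sq_eq (bigO_sq_divr half_c_gt0 (taylor1_norm_ge Hg c_neq0) Hnum).
apply: near0_mono (taylor1_norm_ge Hg c_neq0) => h _ g_ge.
have g_neq0 : g h != 0 by rewrite -normr_gt0 (lt_le_trans half_c_gt0).
rewrite /beta; field; exact/andP.
Qed.

End SmallStepAsymptotics.

Lemma Rpsi_ratio (V : finType) (R : realFieldType) (Rth : V -> V -> R)
    (r : V -> R) (y' y : V) : r y != 0 ->
  Rpsi Rth r y' y =
  (Rth y' y * r y' - kdelta y' y * \sum_(z : V) Rth z y * r z) / r y.
Proof.
move=> ry_neq0; rewrite /Rpsi /kdelta; case: eqVneq => [->|_] /=.
  rewrite mul1r [in RHS](bigD1 y) //= opprD addrA subrr add0r mulNr mulr_suml.
  by congr (- _); apply: eq_bigr => z _; field.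
by rewrite mul0r subr0; field.
Qed.

Theorem theorem3 (R : realFieldType) (V : finType)
  (Rth : V -> V -> R) (p : R -> V -> V -> R) (r : V -> R) :
  is_rate_matrix Rth ->
  (* p dt . y is a probability distribution on V for every step dt > 0 *)
  (forall dt y y', 0 < dt -> 0 <= p dt y' y) ->
  (forall dt y, 0 < dt -> \sum_(y' : V) p dt y' y = 1) ->
  (* p_{s|t}(y'|y) = delta + Rth(y',y) dt + O(dt^2) *)
  (forall y' y, bigO_sq (fun dt => p dt y' y - kdelta y' y - Rth y' y * dt)) ->
  (forall y, 0 < r y) ->
  forall y' y,
    bigO_sq (fun dt => qpsi p r dt y' y - kdelta y' y - Rpsi Rth r y' y * dt).
Proof.
move=> _ _ _ Hp r_gt0 y' y.
have ry_neq0 : r y != 0 by rewrite gt_eqF.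
have Hnum := taylor1_mulr (r y') (Hp y' y).
have Hden : taylor1 (fun h => \sum_(z : V) p h z y * r z)
                    (r y) (\sum_(z : V) Rth z y * r z).
  rewrite -{1}(sum_kdelta_mull r y); apply: taylor1_sum => z.
  exact: taylor1_mulr (Hp z y).
have Hq := taylor1_div Hnum Hden ry_neq0.
rewrite kdelta_mull mulfK // in Hq.
apply: bigO_sq_eq Hq; apply: near0_mono (near0_lt ltr01) => h _ _.
by rewrite Rpsi_ratio //; congr (_ - _ - _ * h); field.
Qed.
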